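(* Let $n,q$ be positive integers and $f_{n,q}:\mathbb{C}^3\to\mathbb{C}$, $f_{n,q}(x,y,z)=x-3x^{2n+1}y^{2q}+2x^{3n+1}y^{3q}+yz$. Then $f_{n,q}$ satisfies Malgrange's condition for every $t_0\in\mathbb{C}$ if and only if $n\le q$.
   Context: For a polynomial $g:\mathbb{C}^m\to\mathbb{C}$, let $\operatorname{grad} g(x)=\left(\overline{\frac{\partial g}{\partial x_1}(x)},\dots,\overline{\frac{\partial g}{\partial x_m}(x)}\right)$. The polynomial $g$ satisfies Malgrange's condition for $t_0\in\mathbb{C}$ if there is no sequence $(z^k)\subseteq\mathbb{C}^m$ with $\|z^k\|\to\infty$, $g(z^k)\to t_0$ and $\|z^k\|\cdot\|\operatorname{grad} g(z^k)\|\to 0$ (equivalently: there exist $R>0$, $\eta>0$, $\delta>0$ such that $\|x\|\cdot\|\operatorname{grad} g(x)\|\ge\delta$ whenever $\|x\|\ge R$ and $|g(x)-t_0|<\eta$). *)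

From mathcomp Require Import all_boot all_order all_algebra reals.
From mathcomp.real_closed Require Import complex.

Set Implicit Arguments.
Unset Strict Implicit.
Unset Printing Implicit Defensive.
Import Order.TTheory GRing.Theory Num.Theory.
Local Open Scope ring_scope.

Section Malgrange.
Variable R : realType.
Local Notation C := (R[i]).

Definition cabs (z : C) : R := ComplexField.Normc.normc z.

Definition vnorm (m : nat) (v : 'rV[C]_m) : R :=
  Num.sqrt (\sum_(i < m) cabs (v 0 i) ^+ 2).

Definition is_partial (m : nat) (g : 'rV[C]_m -> C) (i : 'I_m)
    (x : 'rV[C]_m) (d : C) : Prop :=
  forall eps : R, 0 < eps -> exists del : R, 0 < del /\
    forall h : C, 0 < cabs h -> cabs h < del ->
      cabs ((g (x + h *: delta_mx 0 i) - g x) / h - d) < eps.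

Definition grad_of (m : nat) (D : 'rV[C]_m) : 'rV[C]_m := map_mx (@conjc R) D.

(* Malgrange's condition for t0 (in the equivalent R, eta, delta form) *)
Definition Malgrange (m : nat) (g : 'rV[C]_m -> C) (t0 : C) : Prop :=
  exists (Rr eta delta : R), [/\ 0 < Rr, 0 < eta & 0 < delta] /\
    forall x : 'rV[C]_m, Rr <= vnorm x -> cabs (g x - t0) < eta ->
      forall D : 'rV[C]_m, (forall i, is_partial g i x (D 0 i)) ->
        delta <= vnorm x * vnorm (grad_of D).

Definition f_nq (n q : nat) (v : 'rV[C]_3) : C :=
  let x := v 0 0 in let y := v 0 1 in let z := v 0 2 in
  x - 3 * x ^+ (2 * n + 1) * y ^+ (2 * q)
    + 2 * x ^+ (3 * n + 1) * y ^+ (3 * q) + y * z.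

End Malgrange.

From mathcomp Require Import all_boot all_order all_algebra reals.
From mathcomp.real_closed Require Import complex.
From mathcomp Require Import ring lra.
Set Implicit Arguments.
Unset Strict Implicit.
Unset Printing Implicit Defensive.
Import Order.TTheory GRing.Theory Num.Theory.
Local Open Scope ring_scope.
Local Open Scope complex_scope.

(* Write [u = x^n y^q].  Then [f = x (1 - 3u^2 + 2u^3) + yz], its partial
   derivatives in [x] and [z] are [1 - 3(2n+1)u^2 + 2(3n+1)u^3] and [y], and
   [1 - 3u^2 + 2u^3] has a double root at [u = 1].
   If [q < n], the points [(s^q, s^-n, 0)] lie on [u = 1]: there [f = 0] and
   [grad f = (0, 0, conj y)], so [|v| |grad f(v)| <= 2/s -> 0] while [|v| -> oo].
   If [n <= q] and [|v| >= 1], then [|u| <= (|v| |y|)^q <= (|v| |grad f(v)|)^q],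
   so a small [|v| |grad f(v)|] makes both [u] and [df/dx] small, which is
   impossible since [df/dx = 1] at [u = 0]. *)

Section PolyDifferenceQuotient.
Variable F : numFieldType.
Implicit Types (p r : {poly F}) (a h : F).

Lemma take_poly1 p : take_poly 1 p = (p`_0)%:P.
Proof. by apply/polyP => i; rewrite coef_take_poly coefC; case: i. Qed.

Lemma horner_drop_poly1 p h : p.[h] = p`_0 + (drop_poly 1 p).[h] * h.
Proof.
rewrite -{1}(poly_take_drop 1 p) take_poly1.
by rewrite hornerD hornerM hornerC horner_exp hornerX expr1.
Qed.

Lemma norm_horner_le_sum p h :
  `|h| <= 1 -> `|p.[h]| <= \sum_(i < size p) `|p`_i|.
Proof.
move=> h1; rewrite horner_coef; apply: le_trans (ler_norm_sum _ _ _) _.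
apply: ler_sum => i _; rewrite normrM normrX.
by apply: ler_piMr => //; apply: exprn_ile1.
Qed.

Lemma poly_diff_quotient_expansion p a : exists r, forall h, h != 0 ->
  (p.[a + h] - p.[a]) / h - p^`().[a] = r.[h] * h.
Proof.
set t := p \Po ('X + a%:P); set s := drop_poly 1 t.
have tE h : t.[h] = p.[a + h] by rewrite horner_comp !hornerE addrC.
have s0 : s`_0 = p^`().[a].
  rewrite coef_drop_poly add0n -[t`_1]mulr1n -coef_deriv -horner_coef0.
  rewrite deriv_comp hornerM horner_comp derivD derivX derivC addr0.
  by rewrite !hornerE.
exists (drop_poly 1 s) => h h0.
have ta : p.[a] = t`_0 by rewrite -horner_coef0 tE addr0.
rewrite -tE ta (horner_drop_poly1 t) -/s (horner_drop_poly1 s) s0.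
by field.
Qed.

Lemma poly_diff_quotient_cvg p a e : 0 < e -> exists2 d, 0 < d &
  forall h, h != 0 -> `|h| < d -> `|(p.[a + h] - p.[a]) / h - p^`().[a]| < e.
Proof.
move=> e0; have [r rE] := poly_diff_quotient_expansion p a.
set M := \sum_(i < size r) `|r`_i|.
have M0 : 0 <= M by apply: sumr_ge0.
have Me : 0 < M + 1 + e by rewrite addr_gt0 // ltr_pwDr.
exists (e / (M + 1 + e)); first by rewrite divr_gt0.
move=> h h0; rewrite ltr_pdivlMr // => hX.
have h1 : `|h| <= 1.
  rewrite -(ler_pM2r e0) mul1r; apply/ltW/(le_lt_trans _ hX).
  by rewrite ler_wpM2l // lerDr addr_ge0.
rewrite rE // normrM mulrC; apply: le_lt_trans hX.
rewrite ler_wpM2l // (le_trans (norm_horner_le_sum r h1)) //.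
by rewrite -addrA lerDl addr_ge0 // ltW.
Qed.

End PolyDifferenceQuotient.

Section ComplexModulus.
Variable R : realType.
Local Notation C := (R[i]).
Implicit Types a b z : C.

Lemma cabsE z : (cabs z)%:C = `|z|.
Proof. by case: z => a b; rewrite normc_def. Qed.

Lemma cabs_ge0 z : 0 <= cabs z.
Proof. by rewrite -lecR raddf0 cabsE. Qed.

Lemma cabs_gt0 z : (0 < cabs z) = (z != 0).
Proof. by rewrite -ltcR raddf0 cabsE normr_gt0. Qed.

Lemma cabsD a b : cabs (a + b) <= cabs a + cabs b.
Proof. by rewrite -lecR rmorphD /= !cabsE ler_normD. Qed.

Lemma cabsN z : cabs (- z) = cabs z.
Proof. by apply: complexI; rewrite !cabsE normrN. Qed.

Lemma cabsM a b : cabs (a * b) = cabs a * cabs b.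
Proof. by apply: complexI; rewrite rmorphM /= !cabsE normrM. Qed.

Lemma cabsX z k : cabs (z ^+ k) = cabs z ^+ k.
Proof. by apply: complexI; rewrite rmorphXn /= !cabsE normrX. Qed.

Lemma cabsV z : cabs z^-1 = (cabs z)^-1.
Proof. exact: Normc.normcV. Qed.

Lemma cabs_conj z : cabs (z^*)%C = cabs z.
Proof. by case: z => a b; rewrite /cabs /= sqrrN. Qed.

Lemma cabs_real (r : R) : cabs r%:C = `|r|.
Proof. by apply: complexI; rewrite cabsE normc_def /= expr0n addr0 sqrtr_sqr. Qed.

Lemma cabs0 : cabs (0 : C) = 0.
Proof. by rewrite -(rmorph0 (real_complex R)) cabs_real normr0. Qed.

Lemma cabs1 : cabs (1 : C) = 1.
Proof. by rewrite -(rmorph1 (real_complex R)) cabs_real normr1. Qed.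

Lemma cabs_nat k : cabs (k%:R : C) = k%:R.
Proof. by rewrite -(rmorph_nat (real_complex R)) cabs_real ger0_norm. Qed.

End ComplexModulus.

Section PartialDerivatives.
Variables (R : realType) (m : nat) (g : 'rV[R[i]]_m -> R[i]).
Variables (i : 'I_m) (x : 'rV[R[i]]_m).

Lemma is_partial_poly (p : {poly R[i]}) :
  (forall h, g (x + h *: delta_mx 0 i) = p.[x 0 i + h]) ->
  is_partial g i x p^`().[x 0 i].
Proof.
move=> gE eps; rewrite -ltcR raddf0 => eps0.
have gx : g x = p.[x 0 i] by rewrite -[in LHS](addr0 x) -(scale0r (delta_mx 0 i)) gE addr0.
have [d d0 Hd] := poly_diff_quotient_cvg p (x 0 i) eps0.
move: d0; rewrite ltcE /= => /andP[/eqP dI dR].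
exists (complex.Re d); split => // h h0 hd.
rewrite -ltcR cabsE gE gx; apply: Hd; first by rewrite -cabs_gt0.
by move: dI hd; case: (d) => a b /= -> hd; rewrite -cabsE ltcR.
Qed.

Lemma is_partial_uniq d1 d2 :
  is_partial g i x d1 -> is_partial g i x d2 -> d1 = d2.
Proof.
move=> H1 H2; apply/eqP; rewrite -subr_eq0; apply/negPn/negP; rewrite -cabs_gt0 => c0.
have e0 : 0 < cabs (d1 - d2) / 2 by rewrite divr_gt0.
have [del1 [del1_gt0 Q1]] := H1 _ e0; have [del2 [del2_gt0 Q2]] := H2 _ e0.
set k := Num.min del1 del2 / 2.
have min_gt0 : 0 < Num.min del1 del2 by rewrite lt_min del1_gt0.
have k0 : 0 < k by rewrite divr_gt0.
have [kl1 kl2] : k < del1 /\ k < del2.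
  have k_lt_min : k < Num.min del1 del2 by rewrite ltr_pdivrMr // ltr_pMr // ltr1n.
  by split; apply: (lt_le_trans k_lt_min); rewrite ge_min lexx ?orbT.
have hk : cabs k%:C = k by rewrite cabs_real gtr0_norm.
have := Q1 k%:C; rewrite hk => /(_ k0 kl1) A1.
have := Q2 k%:C; rewrite hk => /(_ k0 kl2) A2.
set Q := (g _ - g x) / _ in A1 A2.
have : cabs (d1 - d2) <= cabs (Q - d2) + cabs (Q - d1).
  have -> : d1 - d2 = (Q - d2) + - (Q - d1) by ring.
  by rewrite -(cabsN (Q - d1)) cabsD.
lra.
Qed.

End PartialDerivatives.

Section VectorNorm.
Variables (R : realType) (m : nat).
Implicit Types v D : 'rV[R[i]]_m.

Lemma vnorm_ge0 v : 0 <= vnorm v.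
Proof. exact: sqrtr_ge0. Qed.

Lemma cabs_le_vnorm v j : cabs (v 0 j) <= vnorm v.
Proof.
have sum_ge0 : 0 <= \sum_(k < m) cabs (v 0 k) ^+ 2 by apply: sumr_ge0 => k _; apply: sqr_ge0.
rewrite /vnorm -(ger0_norm (cabs_ge0 (v 0 j))) -sqrtr_sqr ler_sqrt //.
by rewrite (bigD1 j) //= lerDl; apply: sumr_ge0 => k _; apply: sqr_ge0.
Qed.

Lemma vnorm_grad_of D : vnorm (grad_of D) = vnorm D.
Proof. by rewrite /vnorm; congr Num.sqrt; apply: eq_bigr => j _; rewrite mxE cabs_conj. Qed.

End VectorNorm.

Lemma vnorm3_le (R : realType) (v : 'rV[R[i]]_3) :
  vnorm v <= cabs (v 0 0) + cabs (v 0 1) + cabs (v 0 2).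
Proof.
have sum3 (F : 'I_3 -> R) : \sum_(j < 3) F j = F 0 + F 1 + F 2.
  rewrite !big_ord_recl big_ord0 addr0 addrA.
  by congr (F _ + F _ + F _); apply/val_inj.
have := cabs_ge0 (v 0 0); have := cabs_ge0 (v 0 1); have := cabs_ge0 (v 0 2).
move=> a b c; rewrite /vnorm sum3 -(@ger0_norm _ (cabs (v 0 0) + _ + _)); last lra.
by rewrite -sqrtr_sqr ler_sqrt ?sqr_ge0 //; nra.
Qed.

Section PartialsOfFnq.
Variables (R : realType) (n q : nat).
Local Notation C := (R[i]).
Local Notation f := (@f_nq R n q).
Implicit Types (v : 'rV[C]_3) (u x y z h : C).

(* The partial derivative of [f_nq] in [x], written in terms of [u = x^n y^q]. *)
Definition dfdx_nq u : C := 1 - 3 * (2 * n + 1)%:R * u ^+ 2 + 2 * (3 * n + 1)%:R * u ^+ 3.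

Lemma dfdx_nq1 : dfdx_nq 1 = 0.
Proof. by rewrite /dfdx_nq !expr1n !natrD; ring. Qed.

Let exprMC (a : C) k m : a ^+ (k * m) = (a ^+ m) ^+ k.
Proof. by rewrite mulnC exprM. Qed.

Lemma f_nqE v : let u := v 0 0 ^+ n * v 0 1 ^+ q in
  f v = v 0 0 * (1 - 3 * u ^+ 2 + 2 * u ^+ 3) + v 0 1 * v 0 2.
Proof. by rewrite /f_nq !(exprD _ _ 1) !exprMC; ring. Qed.

Lemma mxE_add_delta v h i j :
  (v + h *: delta_mx 0 i) 0 j = v 0 j + (if j == i then h else 0).
Proof. by rewrite !mxE eqxx /=; case: (j == i); rewrite ?mulr1 ?mulr0. Qed.

Definition f_nq_slice_x y z : {poly C} :=
  'X - 3%:P * 'X^(2 * n + 1) * (y ^+ (2 * q))%:P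
     + 2%:P * 'X^(3 * n + 1) * (y ^+ (3 * q))%:P + (y * z)%:P.

Definition f_nq_slice_y x z : {poly C} :=
  x%:P - (3 * x ^+ (2 * n + 1))%:P * 'X^(2 * q)
       + (2 * x ^+ (3 * n + 1))%:P * 'X^(3 * q) + 'X * z%:P.

Definition f_nq_slice_z x y : {poly C} :=
  (x - 3 * x ^+ (2 * n + 1) * y ^+ (2 * q) + 2 * x ^+ (3 * n + 1) * y ^+ (3 * q))%:P
  + y%:P * 'X.

Lemma is_partial_f_nq_x v :
  is_partial f 0 v (dfdx_nq (v 0 0 ^+ n * v 0 1 ^+ q)).
Proof.
have -> : dfdx_nq (v 0 0 ^+ n * v 0 1 ^+ q) =
    (f_nq_slice_x (v 0 1) (v 0 2))^`().[v 0 0].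
  rewrite /dfdx_nq /f_nq_slice_x !derivE !hornerE !addn1 /=.
  by rewrite !(hornerMn, horner_exp, hornerX) !exprMC; ring.
apply: is_partial_poly => h.
by rewrite /f_nq !mxE_add_delta /= !addr0 !hornerE.
Qed.

Lemma is_partial_f_nq_y v : (0 < q)%N -> v 0 1 != 0 ->
  let u := v 0 0 ^+ n * v 0 1 ^+ q in
  is_partial f 1 v (6 * q%:R * v 0 0 * (u ^+ 3 - u ^+ 2) / v 0 1 + v 0 2).
Proof.
move=> q_gt0 y0 u.
have -> : 6 * q%:R * v 0 0 * (u ^+ 3 - u ^+ 2) / v 0 1 + v 0 2 =
    (f_nq_slice_y (v 0 0) (v 0 2))^`().[v 0 1].
  have yE k : (0 < k)%N -> v 0 1 ^+ (k * q).-1 = (v 0 1 ^+ q) ^+ k / v 0 1.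
    move=> k_gt0; apply: (mulIf y0); rewrite divfK ?expf_neq0 // -exprSr.
    by rewrite prednK ?muln_gt0 ?k_gt0 // exprMC.
  rewrite /f_nq_slice_y !derivE !hornerE !(hornerMn, horner_exp, hornerX).
  by rewrite !(exprD _ _ 1) !exprMC !yE // /u /=; field.
apply: is_partial_poly => h.
by rewrite /f_nq !mxE_add_delta /= !addr0 !hornerE.
Qed.

Lemma is_partial_f_nq_z v : is_partial f 2 v (v 0 1).
Proof.
have -> : v 0 1 = (f_nq_slice_z (v 0 0) (v 0 1))^`().[v 0 2].
  by rewrite /f_nq_slice_z !derivE !hornerE.
apply: is_partial_poly => h.
by rewrite /f_nq !mxE_add_delta /= !addr0 !hornerE.
Qed.

End PartialsOfFnq.

Section CriticalCurve.
Variables (R : realType) (n q : nat).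
Hypotheses (n_gt0 : (0 < n)%N) (q_gt0 : (0 < q)%N).
Local Notation C := (R[i]).
Local Notation f := (@f_nq R n q).

Definition curve (s : R) : 'rV[C]_3 := \row_(j < 3) [:: s%:C ^+ q; s%:C ^- n; 0]`_j.

Definition curve_grad (s : R) : 'rV[C]_3 := \row_(j < 3) [:: 0; 0; s%:C ^- n]`_j.

Lemma curveE s :
  [/\ curve s 0 0 = s%:C ^+ q, curve s 0 1 = s%:C ^- n & curve s 0 2 = 0].
Proof. by split; rewrite mxE. Qed.

Lemma curve_gradE s :
  [/\ curve_grad s 0 0 = 0, curve_grad s 0 1 = 0 & curve_grad s 0 2 = s%:C ^- n].
Proof. by split; rewrite mxE. Qed.

Section AtParameter.
Variables (s : R) (s_ge1 : 1 <= s).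

Let s_gt0 : 0 < s. Proof. exact: lt_le_trans ltr01 s_ge1. Qed.

Let sC_neq0 : s%:C != 0.
Proof. by rewrite -cabs_gt0 cabs_real gtr0_norm. Qed.

Lemma curve_monomial : curve s 0 0 ^+ n * curve s 0 1 ^+ q = 1.
Proof.
have [-> -> _] := curveE s.
by rewrite exprVn -!exprM mulnC divff // expf_neq0.
Qed.

Lemma f_nq_curve : f (curve s) = 0.
Proof. by rewrite f_nqE curve_monomial; have [_ _ ->] := curveE s; rewrite expr1n; ring. Qed.

Lemma is_partial_f_nq_curve j : is_partial f j (curve s) (curve_grad s 0 j).
Proof.
have: j = 0 \/ j = 1 \/ j = 2.
  by case: j => -[|[|[|k]]] Hj; [left|right; left|right; right|by []]; apply/val_inj.
move=> [->|[->|->]]; rewrite [curve_grad s 0 _]mxE /=.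
- by have := is_partial_f_nq_x n q (curve s); rewrite curve_monomial dfdx_nq1.
- have [_ y_E z_E] := curveE s.
  have y_neq0 : curve s 0 1 != 0 by rewrite y_E invr_eq0 expf_neq0.
  have := is_partial_f_nq_y n q_gt0 y_neq0.
  by rewrite /= curve_monomial z_E !expr1n subrr mulr0 mul0r addr0.
- by have := is_partial_f_nq_z n q (curve s); have [_ -> _] := curveE s.
Qed.

Lemma vnorm_curve_ge : s <= vnorm (curve s).
Proof.
apply: le_trans (cabs_le_vnorm _ 0); have [-> _ _] := curveE s.
rewrite cabsX cabs_real gtr0_norm //.
by rewrite -[leLHS]expr1 ler_weXn2l // q_gt0.
Qed.

Lemma vnorm_curve_mul_le : (q < n)%N ->
  vnorm (curve s) * vnorm (grad_of (curve_grad s)) <= 2 / s.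
Proof.
move=> lt_qn.
have inv_pow_le k : (0 < k)%N -> s ^- k <= s^-1.
  move=> k_gt0; rewrite lef_pV2 ?posrE ?exprn_gt0 //.
  by rewrite -[leLHS]expr1 ler_weXn2l.
have cabs_y : cabs (s%:C ^- n) = s ^- n by rewrite cabsV cabsX cabs_real gtr0_norm.
have normN : vnorm (curve s) <= s ^+ q + s ^- n.
  apply: le_trans (vnorm3_le _) _.
  have [-> -> ->] := curveE s.
  by rewrite cabsX cabs_real gtr0_norm // cabs_y cabs0 addr0.
have normG : vnorm (grad_of (curve_grad s)) <= s ^- n.
  rewrite vnorm_grad_of; apply: le_trans (vnorm3_le _) _.
  by have [-> -> ->] := curve_gradE s; rewrite cabs_y cabs0 !add0r.
have termN : s ^+ q * s ^- n <= s^-1.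
  rewrite -(subnKC (ltnW lt_qn)) exprD invfM mulrA divff ?expf_neq0 ?gt_eqF //.
  by rewrite mul1r inv_pow_le // subn_gt0.
have termG : s ^- n * s ^- n <= s^-1 by rewrite -invfM -exprD inv_pow_le ?addn_gt0 ?n_gt0.
apply: le_trans (_ : (s ^+ q + s ^- n) * s ^- n <= _).
  by apply: ler_pM; rewrite ?vnorm_ge0.
rewrite mulrDl; lra.
Qed.

End AtParameter.

Lemma f_nq_not_Malgrange0 : (q < n)%N -> ~ Malgrange f 0.
Proof.
move=> lt_qn [Rr [eta [delta [[Rr_gt0 eta_gt0 delta_gt0] HM]]]].
set s := Rr + 2 / delta + 1.
have two_div_gt0 : 0 < 2 / delta by rewrite divr_gt0.
have s_ge1 : 1 <= s by rewrite /s; lra.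
have far : Rr <= vnorm (curve s).
  by apply: le_trans (vnorm_curve_ge s_ge1); rewrite /s; lra.
have near_fiber : cabs (f (curve s) - 0) < eta by rewrite f_nq_curve // subr0 cabs0.
have := HM _ far near_fiber _ (is_partial_f_nq_curve s_ge1).
have : 2 / s < delta.
  by rewrite ltr_pdivrMr ?(lt_le_trans ltr01) // -ltr_pdivrMl // /s; lra.
have := vnorm_curve_mul_le s_ge1 lt_qn; lra.
Qed.

End CriticalCurve.

Section MalgrangeCondition.
Variables (R : realType) (n q : nat).
Local Notation C := (R[i]).

Lemma cabs_monomial_le (v : 'rV[C]_3) : (n <= q)%N -> 1 <= vnorm v ->
  cabs (v 0 0 ^+ n * v 0 1 ^+ q) <= (vnorm v * cabs (v 0 1)) ^+ q.
Proof.
move=> le_nq N_ge1.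
rewrite cabsM !cabsX exprMn ler_wpM2r ?exprn_ge0 ?cabs_ge0 //.
apply: le_trans (_ : vnorm v ^+ n <= _); last exact: ler_weXn2l.
by rewrite lerXn2r ?nnegrE ?cabs_ge0 ?vnorm_ge0 ?cabs_le_vnorm.
Qed.

Lemma dfdx_nq_lower_bound (u : C) : cabs u <= 1 ->
  1 <= cabs (dfdx_nq n u) + (12 * n%:R + 5) * cabs u ^+ 2.
Proof.
move=> u_le1; have a_ge0 := cabs_ge0 u; have n_ge0 : 0 <= n%:R :> R by [].
have a3 : cabs u ^+ 3 <= cabs u ^+ 2 by rewrite exprS ler_piMl ?exprn_ge0.
suff : 1 <= cabs (dfdx_nq n u) + 3 * (2 * n%:R + 1) * cabs u ^+ 2
                                + 2 * (3 * n%:R + 1) * cabs u ^+ 3 by nra.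
have one_eq : dfdx_nq n u + 3 * (2 * n + 1)%:R * u ^+ 2
              - 2 * (3 * n + 1)%:R * u ^+ 3 = 1 by rewrite /dfdx_nq; ring.
rewrite -[leLHS]cabs1 -[in cabs 1]one_eq.
apply: le_trans (cabsD _ _) _; rewrite cabsN; apply: lerD; last first.
  by rewrite cabsM cabsX cabsM !cabs_nat natrD natrM.
by apply: le_trans (cabsD _ _) _; rewrite cabsM cabsX cabsM !cabs_nat natrD natrM.
Qed.

Lemma f_nq_Malgrange : (0 < q)%N -> (n <= q)%N ->
  forall t0 : C, Malgrange (@f_nq R n q) t0.
Proof.
move=> q_gt0 le_nq t0.
set K : R := 12 * n%:R + 5; set dl := K^-1.
have K_ge5 : 5 <= K by rewrite /K; have : 0 <= n%:R :> R by []; lra.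
have K_gt0 : 0 < K by apply: lt_le_trans K_ge5.
have dl_gt0 : 0 < dl by rewrite invr_gt0.
have K_dl : K * dl = 1 by rewrite divff ?gt_eqF.
exists 1, 1, dl; split=> // v N_ge1 _ D HD; rewrite leNgt; apply/negP.
rewrite vnorm_grad_of; set N := vnorm v in N_ge1 *; move=> small.
set u := v 0 0 ^+ n * v 0 1 ^+ q.
have D0 : D 0 0 = dfdx_nq n u := is_partial_uniq (HD 0) (is_partial_f_nq_x n q v).
have D2 : D 0 2 = v 0 1 := is_partial_uniq (HD 2) (is_partial_f_nq_z n q v).
have le_ND d : cabs d <= vnorm D -> cabs d <= N * vnorm D.
  by move=> /le_trans; apply; rewrite ler_peMl ?vnorm_ge0.
have dx_small : cabs (dfdx_nq n u) < dl by rewrite -D0 (le_lt_trans (le_ND _ _)) ?cabs_le_vnorm.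
have y_small : N * cabs (v 0 1) < dl.
  by rewrite (le_lt_trans _ small) // ler_wpM2l ?(le_trans ler01) // -D2 cabs_le_vnorm.
have dl5 : dl * 5 <= 1 by nra.
have dl_le1 : dl <= 1 by lra.
have u_small : cabs u <= dl.
  apply: le_trans (cabs_monomial_le le_nq N_ge1) (le_trans _ (ltW y_small)).
  rewrite -/N ler_iXnr ?mulr_ge0 ?cabs_ge0 ?(le_trans ler01) //.
  exact: le_trans (ltW y_small) dl_le1.
have Ku2 : K * cabs u ^+ 2 <= dl.
  rewrite -[leRHS]mul1r -K_dl -mulrA -expr2 ler_wpM2l ?(ltW K_gt0) //.
  by rewrite lerXn2r ?nnegrE ?cabs_ge0 ?(ltW dl_gt0).
have := dfdx_nq_lower_bound (le_trans u_small dl_le1); rewrite -/K; lra.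
Qed.

End MalgrangeCondition.

Theorem proposition1p8 (R : realType) (n q : nat) :
  (0 < n)%N -> (0 < q)%N ->
  ((forall t0 : R[i], Malgrange (@f_nq R n q) t0) <-> (n <= q)%N).
Proof.
move=> n_gt0 q_gt0; split=> [Malgrange_all | le_nq]; last exact: f_nq_Malgrange.
rewrite leqNgt; apply/negP => lt_qn.
exact: f_nq_not_Malgrange0 n_gt0 q_gt0 lt_qn (Malgrange_all 0).
Qed.
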